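(* Let $n\ge1$, $\epsilon\in[0,1/2]$, $m\in\{j/2^n:0\le j\le 2^n\}$, and let $\Phi:[0,1]\to\mathbb{R}$ be convex. Then there exists a monotone Boolean function $f:\{0,1\}^n\to\{0,1\}$ with $\mathbb{E} f=m$ such that $\mathbb{E}\Phi(T_\epsilon f)\ge\mathbb{E}\Phi(T_\epsilon g)$ for every Boolean function $g:\{0,1\}^n\to\{0,1\}$ with $\mathbb{E} g=m$.
   Context: $\{0,1\}^n$ carries the uniform measure and $\mathbb{E}$ is expectation under it. The noise operator is $T_\epsilon f(x)=\mathbb{E} f(x+Z)$, where $Z$ has independent Bernoulli($\epsilon$) coordinates and addition is mod 2. A function $f$ is monotone if $f(x)\le f(y)$ whenever $x_i\le y_i$ for all $i\in[n]$. *)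

From mathcomp Require Import all_boot all_order all_algebra.
Set Implicit Arguments. Unset Strict Implicit. Unset Printing Implicit Defensive.
Import Order.TTheory GRing.Theory Num.Theory.
Local Open Scope ring_scope.

Definition cube (n : nat) := {ffun 'I_n -> bool}.

Definition cadd n (x z : cube n) : cube n := [ffun i => x i (+) z i].

Definition Ecube (R : numFieldType) n (F : cube n -> R) : R :=
  (\sum_(x : cube n) F x) / (2 ^+ n)%:R.

Definition bern_weight (R : numFieldType) n (eps : R) (z : cube n) : R :=
  \prod_(i < n) (if z i then eps else 1 - eps).

Definition noise (R : numFieldType) n (eps : R) (f : cube n -> R) (x : cube n) : R :=
  \sum_(z : cube n) bern_weight eps z * f (cadd x z).

Definition bval (R : numFieldType) n (f : cube n -> bool) : cube n -> R :=
  fun x => (f x)%:R.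

Definition monotone_bool n (f : cube n -> bool) : Prop :=
  forall x y : cube n, (forall i, x i ==> y i) -> f x ==> f y.

Definition convex_on01 (R : realFieldType) (Phi : R -> R) : Prop :=
  forall x y t : R, 0 <= x <= 1 -> 0 <= y <= 1 -> 0 <= t <= 1 ->
    Phi (t * x + (1 - t) * y) <= t * Phi x + (1 - t) * Phi y.

From mathcomp Require Import all_boot all_order all_algebra.
From mathcomp Require Import lra zify.
Import Order.TTheory GRing.Theory Num.Theory.
Set Implicit Arguments. Unset Strict Implicit. Unset Printing Implicit Defensive.
Local Open Scope ring_scope.

(* Compressing a Boolean function in direction i (putting the smaller of its two
   values on each edge {x, x + e_i} at the endpoint with x_i = 0) preserves the
   mean and cannot decrease E Phi(T_eps f): on each such edge the two values of
   T_eps f keep their sum and, since eps <= 1/2, move apart, so convexity of Phi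
   applies.  Take f maximising E Phi(T_eps f) among functions of mean m and,
   among those, maximising sum_x f(x) |x|.  A compression that changes f strictly
   increases the second quantity, so no compression changes f, i.e. f is
   monotone. *)

Section Flip.
Variable n : nat.
Implicit Types (i k : 'I_n) (x z : cube n) (f : cube n -> bool).

Definition flip i x : cube n := [ffun k => if k == i then ~~ x k else x k].

Lemma flipK i : involutive (flip i).
Proof.
by move=> x; apply/ffunP => k; rewrite !ffunE; case: eqP => // _; rewrite negbK.
Qed.

Lemma flip_at i x : flip i x i = ~~ x i.
Proof. by rewrite ffunE eqxx. Qed.

Lemma flip_ne i k x : k != i -> flip i x k = x k.
Proof. by rewrite ffunE => /negPf ->. Qed.

Lemma cadd_flipl i x z : cadd (flip i x) z = flip i (cadd x z).
Proof. by apply/ffunP => k; rewrite !ffunE; case: eqP => // _; rewrite addNb. Qed.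

Lemma cadd_flipr i x z : cadd x (flip i z) = flip i (cadd x z).
Proof. by apply/ffunP => k; rewrite !ffunE; case: eqP => // _; rewrite addbN. Qed.

Lemma sum_flip_pairs (M : nmodType) i (F : cube n -> M) :
  \sum_(x : cube n) F x = \sum_(x : cube n | ~~ x i) (F x + F (flip i x)).
Proof.
rewrite (bigID (fun x : cube n => ~~ x i)) big_split /=; congr (_ + _).
rewrite (reindex (flip i)) /=; last by exists (flip i) => y _; rewrite flipK.
by apply: eq_bigl => x; rewrite flip_at negbK.
Qed.

Definition weight x : nat := \sum_(k < n) x k.

Lemma weight_le x : (weight x <= n)%N.
Proof.
rewrite -[X in (_ <= X)%N]card_ord -sum1_card.
by apply: leq_sum => k _; case: (x k).
Qed.

Lemma weight_flip i x : ~~ x i -> weight (flip i x) = (weight x).+1.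
Proof.
move=> /negPf xi; rewrite /weight (bigD1 i) // [in RHS](bigD1 i) //= flip_at xi.
by congr (_.+1); apply: eq_bigr => k /flip_ne ->.
Qed.

Lemma monotone_bool_flip (f : cube n -> bool) :
  (forall i x, ~~ x i -> f x -> f (flip i x)) -> monotone_bool f.
Proof.
move=> up x y le_xy; apply/implyP => fx.
have [N] := ubnP (n - weight x).
elim: N x le_xy fx => [|N IH] x le_xy fx // ltN.
have [<- //|neq_xy] := eqVneq x y.
have /existsP[k /andP[xk yk]] : [exists k, ~~ x k && y k].
  apply: contraNT neq_xy => /existsPn none; apply/eqP/ffunP => k.
  by move: (le_xy k) (none k); case: (x k); case: (y k).
apply: (IH (flip k x)); last 2 first.
- exact: up.
- by move: (weight_le (flip k x)); rewrite weight_flip //; lia.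
move=> l; have [->|lk] := eqVneq l k; first by rewrite yk implybT.
by rewrite flip_ne //; apply: le_xy.
Qed.

Definition compress i (f : cube n -> bool) : {ffun cube n -> bool} :=
  [ffun x : cube n => if x i then f x || f (flip i x) else f x && f (flip i x)].

Lemma compress_lo i f x : ~~ x i -> compress i f x = f x && f (flip i x).
Proof. by move=> /negPf xi; rewrite ffunE xi. Qed.

Lemma compress_hi i f x :
  ~~ x i -> compress i f (flip i x) = f x || f (flip i x).
Proof. by move=> /negPf xi; rewrite ffunE flip_at xi flipK orbC. Qed.

Lemma sum_compress (M : nmodType) i f (F : bool -> M) :
  \sum_(x : cube n) F (compress i f x) = \sum_(x : cube n) F (f x).
Proof.
rewrite !(sum_flip_pairs i); apply: eq_bigr => x xi.
rewrite compress_lo // compress_hi //.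
by case: (f x); case: (f (flip i x)) => //=; rewrite addrC.
Qed.

Definition potential f : nat := \sum_(x : cube n) f x * weight x.

Lemma potential_compress i f x :
  ~~ x i -> f x -> ~~ f (flip i x) -> (potential f < potential (compress i f))%N.
Proof.
move=> xi fx fxi; rewrite /potential !(sum_flip_pairs i).
have pair_le (y : cube n) : ~~ y i ->
    (f y * weight y + f (flip i y) * weight (flip i y) <=
     compress i f y * weight y + compress i f (flip i y) * weight (flip i y))%N.
  move=> yi; rewrite compress_lo // compress_hi // weight_flip //.
  by case: (f y); case: (f (flip i y)) => /=; lia.
rewrite (bigD1 x) // [X in (_ < X)%N](bigD1 x) //=.
have lt_x : (f x * weight x + f (flip i x) * weight (flip i x) <
             compress i f x * weight x + compress i f (flip i x) * weight (flip i x))%N.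
  by rewrite compress_lo // compress_hi // weight_flip // fx (negPf fxi) /=; lia.
rewrite -addSn; apply: leq_add lt_x _.
by apply: leq_sum => y /andP[yi _]; apply: pair_le.
Qed.

Local Notation bfun := {ffun cube n -> bool}.

Lemma exists_monotone_maximizer (R : realDomainType)
    (P : pred bfun) (J : bfun -> R) (f0 : bfun) :
  P f0 -> (forall i (f : bfun), P f -> P (compress i f) /\ J f <= J (compress i f)) ->
  exists f : bfun, [/\ P f, monotone_bool f & forall g, P g -> J g <= J f].
Proof.
move=> Pf0 compressP.
case: (arg_maxP J Pf0) => f1 Pf1 f1_max.
pose Q g := P g && (J f1 <= J g).
have Qf1 : Q f1 by rewrite /Q Pf1 lexx.
case: (arg_maxnP (fun g : bfun => potential g) Qf1) => f /andP[Pf le_f1f] f_max.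
exists f; split=> //; last by move=> g /f1_max /le_trans; apply.
apply: monotone_bool_flip => i x xi fx; apply/negPn/negP => fxi.
have [Pcf le_cf] := compressP i f Pf.
have Qcf : Q (compress i f) by rewrite /Q Pcf (le_trans le_f1f le_cf).
by have := f_max _ Qcf; rewrite /= leqNgt (potential_compress xi).
Qed.

End Flip.

Section Noise.
Variables (R : numFieldType) (n : nat) (eps : R).
Implicit Types (i : 'I_n) (x z : cube n) (f : cube n -> bool) (F : cube n -> R).

Lemma bern_weight_sum : \sum_(z : cube n) bern_weight eps z = 1.
Proof.
rewrite -(bigA_distr_bigA (fun _ (b : bool) => if b then eps else 1 - eps)).
by rewrite big1 // => i _; rewrite big_bool /= addrC subrK.
Qed.

Hypothesis eps01 : 0 <= eps <= 1.

Let coord_weight_ge0 (b : bool) : 0 <= if b then eps else 1 - eps.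
Proof. by case/andP: eps01 => e0 e1; case: b; rewrite ?subr_ge0. Qed.

Lemma bern_weight_ge0 z : 0 <= bern_weight eps z.
Proof. by apply: prodr_ge0 => i _. Qed.

Lemma noise_bval01 f x : 0 <= noise eps (bval R f) x <= 1.
Proof.
apply/andP; split.
  by apply: sumr_ge0 => z _; rewrite mulr_ge0 ?bern_weight_ge0 ?ler0n.
rewrite -bern_weight_sum; apply: ler_sum => z _.
by rewrite ler_piMr ?bern_weight_ge0 // /bval; case: (f _).
Qed.

Definition bern_weight_off i z : R :=
  \prod_(k < n | k != i) (if z k then eps else 1 - eps).

Lemma bern_weightD1 i z :
  bern_weight eps z = (if z i then eps else 1 - eps) * bern_weight_off i z.
Proof. by rewrite /bern_weight (bigD1 i). Qed.

Lemma bern_weight_off_flip i z : bern_weight_off i (flip i z) = bern_weight_off i z.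
Proof. by apply: eq_bigr => k /flip_ne ->. Qed.

Lemma bern_weight_off_ge0 i z : 0 <= bern_weight_off i z.
Proof. by apply: prodr_ge0 => k _. Qed.

Definition noise_off i F x : R :=
  \sum_(z : cube n | ~~ z i) bern_weight_off i z * F (cadd x z).

Lemma eq_noise F G : F =1 G -> noise eps F =1 noise eps G.
Proof. by move=> eqFG x; apply: eq_bigr => z _; rewrite eqFG. Qed.

Lemma noise_split i F x :
  noise eps F x = (1 - eps) * noise_off i F x + eps * noise_off i F (flip i x).
Proof.
rewrite /noise (sum_flip_pairs i) /noise_off !mulr_sumr -big_split /=.
apply: eq_bigr => z /negPf zi.
rewrite !(bern_weightD1 i) flip_at zi /= bern_weight_off_flip.
by rewrite cadd_flipr -cadd_flipl !mulrA.
Qed.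

Lemma noise_off_compressD i f x : ~~ x i ->
  noise_off i (bval R (compress i f)) x + noise_off i (bval R (compress i f)) (flip i x)
  = noise_off i (bval R f) x + noise_off i (bval R f) (flip i x).
Proof.
move=> xi; rewrite /noise_off -!big_split; apply: eq_bigr => z zi /=.
have xzi : ~~ cadd x z i by rewrite ffunE (negPf xi) (negPf zi).
rewrite cadd_flipl /bval compress_hi // compress_lo // -!mulrDr.
by case: (f _); case: (f _); rewrite /= ?addr0 ?add0r // addrC.
Qed.

Lemma noise_off_compress_spread i f x : ~~ x i ->
  `|noise_off i (bval R f) (flip i x) - noise_off i (bval R f) x|
  <= noise_off i (bval R (compress i f)) (flip i x)
     - noise_off i (bval R (compress i f)) x.
Proof.
move=> xi; rewrite /noise_off -!sumrB; apply: le_trans (ler_norm_sum _ _ _) _.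
apply: ler_sum => z zi.
have xzi : ~~ cadd x z i by rewrite ffunE (negPf xi) (negPf zi).
rewrite cadd_flipl /bval compress_hi // compress_lo // -!mulrBr normrM.
rewrite ger0_norm ?bern_weight_off_ge0 // ler_wpM2l ?bern_weight_off_ge0 //.
by case: (f _); case: (f _);
  rewrite /= ?subrr ?normr0 ?subr0 ?normr1 // sub0r normrN normr1.
Qed.

End Noise.

Lemma convex_on01_spread (R : realFieldType) (Phi : R -> R) p q p' q' :
  convex_on01 Phi -> 0 <= p' <= 1 -> 0 <= q' <= 1 -> p' <= p <= q' ->
  p + q = p' + q' -> Phi p + Phi q <= Phi p' + Phi q'.
Proof.
move=> convPhi p'01 q'01 /andP[le_p'p le_pq'] sum_eq.
have [eq_p'q'|neq_p'q'] := eqVneq p' q'.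
  have -> : p = p' by lra.
  by have -> : q = q' by lra.
have gap_gt0 : 0 < q' - p' by lra.
pose t := (q' - p) / (q' - p').
have t01 : 0 <= t <= 1.
  by rewrite divr_ge0 ?ler_pdivrMr ?mul1r /=; lra.
have t_gap : t * (q' - p') = q' - p by rewrite divfK // subr_eq0 eq_sym.
have -> : p = t * p' + (1 - t) * q' by move: t_gap; rewrite mulrBr; lra.
have -> : q = t * q' + (1 - t) * p' by move: t_gap; rewrite mulrBr; lra.
apply: le_trans (lerD (convPhi _ _ _ p'01 q'01 t01) (convPhi _ _ _ q'01 p'01 t01)) _.
lra.
Qed.

Lemma sum_Phi_noise_compress (R : realFieldType) n (eps : R) (Phi : R -> R) i
    (f : cube n -> bool) :
  convex_on01 Phi -> 0 <= eps <= 1 / 2 ->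
  \sum_(x : cube n) Phi (noise eps (bval R f) x)
    <= \sum_(x : cube n) Phi (noise eps (bval R (compress i f)) x).
Proof.
move=> convPhi /andP[eps_ge0 eps_le_half].
have eps01 : 0 <= eps <= 1 by apply/andP; split; lra.
rewrite !(sum_flip_pairs i); apply: ler_sum => x xi.
have := noise_bval01 eps01 (compress i f) x.
have := noise_bval01 eps01 (compress i f) (flip i x).
have := noise_off_compressD eps f xi.
have := noise_off_compress_spread eps01 f xi.
rewrite !(noise_split eps i) !flipK ler_norml.
set a := noise_off eps i (bval R f) x; set b := noise_off eps i (bval R f) (flip i x).
set a' := noise_off eps i _ x; set b' := noise_off eps i _ (flip i x).
move=> /andP[spread_lo spread_hi] sum_eq q'01 p'01.
have k1 : 0 <= (1 - 2 * eps) * ((b' - a') - (b - a)) by apply: mulr_ge0; lra.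
have k2 : 0 <= (1 - 2 * eps) * ((b' - a') + (b - a)) by apply: mulr_ge0; lra.
apply: convex_on01_spread => //; last by lra.
by apply/andP; split; lra.
Qed.

Lemma sum_enum_rank_lt (T : finType) j :
  (j <= #|T|)%N -> (\sum_(x : T) (enum_rank x < j : nat))%N = j.
Proof.
move=> le_jT; rewrite (reindex (@enum_val T T)) /=; last first.
  by exists enum_rank => y _; rewrite ?enum_valK ?enum_rankK.
under eq_bigr do rewrite enum_valK.
by rewrite -big_mkcond /= -(big_ord_widen _ (fun=> 1%N)) // sum1_card card_ord.
Qed.

Theorem theorem2 (R : realFieldType) (n : nat) (eps : R) (j : nat)
  (Phi : R -> R) :
  (1 <= n)%N -> 0 <= eps <= 1 / 2 -> (j <= 2 ^ n)%N -> convex_on01 Phi ->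
  exists f : cube n -> bool,
    [/\ monotone_bool f,
        Ecube (bval R f) = j%:R / (2 ^+ n)%:R &
        forall g : cube n -> bool,
          Ecube (bval R g) = j%:R / (2 ^+ n)%:R ->
          Ecube (fun x => Phi (noise eps (bval R g) x))
            <= Ecube (fun x => Phi (noise eps (bval R f) x))].
Proof.
move=> _ eps_range le_j convPhi.
pose J (g : cube n -> bool) := Ecube (fun x => Phi (noise eps (bval R g) x)).
pose P (g : {ffun cube n -> bool}) := Ecube (bval R g) == j%:R / (2 ^+ n)%:R.
have P_init : P [ffun x => (enum_rank x < j)%N].
  rewrite /P /Ecube /bval; under eq_bigr do rewrite ffunE.
  by rewrite -natr_sum sum_enum_rank_lt // card_ffun card_bool card_ord.
have compress_ok i (g : {ffun cube n -> bool}) :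
    P g -> P (compress i g) /\ J g <= J (compress i g).
  move=> Pg; split; first by rewrite /P /Ecube /bval (sum_compress i g (fun b => b%:R)).
  by rewrite /J /Ecube ler_wpM2r ?invr_ge0 ?ler0n ?sum_Phi_noise_compress.
have [f [Pf mono_f f_max]] := exists_monotone_maximizer P_init compress_ok.
exists f; split=> //; first exact/eqP.
move=> g Pg; have bval_g : bval R (finfun g) =1 bval R g by move=> x; rewrite /bval ffunE.
have J_g : J (finfun g) = J g.
  by rewrite /J /Ecube (eq_bigr _ (fun x _ => congr1 Phi (eq_noise eps bval_g x))).
have P_g : P (finfun g) by rewrite /P -Pg /Ecube (eq_bigr _ (fun x _ => bval_g x)).
by rewrite -/(J g) -J_g; apply: f_max.
Qed.
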